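(* Let $S$ be a reflective numerical semigroup with $\mathrm{g}(S)=g\ge1$ and $\mathrm{m}(S)=a$, and let $r\in\{1,\dots,a-1\}$ be the integer with $g\equiv r\pmod a$ (such $r$ exists since $a\nmid g$). Then $\mathrm{F}(S)=2g-r$.
   Context: A numerical semigroup is a submonoid $S$ of $(\mathbb{N}_0,+)$ with finite complement. Its set of gaps is $\mathrm{H}(S)=\mathbb{N}_0\setminus S$, its genus is $\mathrm{g}(S)=\#\mathrm{H}(S)$, its Frobenius number (when $\mathrm{g}(S)\ge1$) is $\mathrm{F}(S)=\max \mathrm{H}(S)$, and its multiplicity $\mathrm{m}(S)$ is the smallest positive element of $S$. A numerical semigroup $S$ of genus $g\ge1$ is called reflective if for every $z\in\{0,1,\dots,g-1\}$ exactly one of $z$ and $z+g$ belongs to $S$. *)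

From mathcomp Require Import all_boot.
Set Implicit Arguments. Unset Strict Implicit. Unset Printing Implicit Defensive.

Definition numerical_semigroup (S : pred nat) : Prop :=
  [/\ S 0,
      (forall x y, S x -> S y -> S (x + y)) &
      exists N, forall n, N <= n -> S n].

Definition genus_is (S : pred nat) (g : nat) : Prop :=
  exists N, (forall n, N <= n -> S n) /\ count (predC S) (iota 0 N) = g.

Definition frobenius_is (S : pred nat) (F : nat) : Prop :=
  ~~ S F /\ (forall n, F < n -> S n).

Definition multiplicity_is (S : pred nat) (m : nat) : Prop :=
  [/\ 0 < m, S m & forall n, 0 < n < m -> ~~ S n].

Definition reflective (S : pred nat) (g : nat) : Prop :=
  forall z, z < g -> S z (+) S (z + g).

From mathcomp Require Import all_boot.
From mathcomp Require Import zify.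

Set Implicit Arguments.
Unset Strict Implicit.
Unset Printing Implicit Defensive.

(* Reflectivity pairs [0, g) with [g, 2g), one gap in each pair, so all g gaps
   lie below 2g and g <= F < 2g (g is a gap since 0 is not).  Descending along
   the multiplicity a, every shifted gap z + g with z < g has a | z; hence
   F - g = k a.  Maximality of F forces F - g + a >= g: otherwise F - g + a
   would lie in S and reflectivity would make F + a a gap.  So 2g - F is the
   residue of g in (0, a], and it is not a because a does not divide g. *)
Lemma reflective_count_gaps (S : pred nat) (g : nat) :
  reflective S g -> count (predC S) (iota 0 (2 * g)) = g.
Proof.
move=> Srefl.
have shift : iota g g = map (addn g) (iota 0 g) by rewrite -iotaDl addn0.
rewrite mul2n -addnn iotaD count_cat add0n shift count_map -count_predUI.
have one_gap z : z \in iota 0 g -> (~~ S z) (+) (~~ S (g + z)).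
  by rewrite mem_iota add0n addnC => /andP [_ /Srefl]; rewrite addbN addNb negbK.
rewrite (@eq_in_count _ (predU _ _) predT); last first.
  by move=> z /one_gap /=; case: (S z); case: (S (g + z)).
rewrite (@eq_in_count _ (predI _ _) pred0); last first.
  by move=> z /one_gap /=; case: (S z); case: (S (g + z)).
by rewrite count_predT count_pred0 size_iota addn0.
Qed.

Lemma reflective_mem_ge_double (S : pred nat) (g : nat) :
  genus_is S g -> reflective S g -> forall n, 2 * g <= n -> S n.
Proof.
move=> [N [SN gapsN]] Srefl n gn; apply/negPn/negP => Sn.
have nN : n < N by case: (leqP N n) => // /SN; rewrite (negPf Sn).
have extra_gap : 0 < count (predC S) (iota (2 * g) (N - 2 * g)).
  by rewrite -has_count; apply/hasP; exists n => //; rewrite mem_iota; lia.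
move: gapsN; rewrite -(subnKC (leq_trans gn (ltnW nN))) iotaD count_cat.
by rewrite add0n reflective_count_gaps //; lia.
Qed.

Section Reflective.

Variables (S : pred nat) (g a : nat).
Hypothesis Sadd : forall x y, S x -> S y -> S (x + y).
Hypothesis Smult : multiplicity_is S a.
Hypothesis Srefl : reflective S g.

Lemma reflective_memN_shift z : z < g -> S z -> ~~ S (z + g).
Proof. by move/Srefl => /[swap] ->. Qed.

Lemma reflective_mem_unshift z : z < g -> ~~ S (z + g) -> S z.
Proof. by move/Srefl; case: (S z); case: (S (z + g)). Qed.

Lemma reflective_shifted_gap_dvd z : z < g -> ~~ S (z + g) -> a %| z.
Proof.
case: Smult => a_gt0 Sa a_min.
elim/ltn_ind: z => z IH zg gap_zg.
have Sz := reflective_mem_unshift zg gap_zg.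
have [za | az] := ltnP z a.
  case: (posnP z) => [-> | z_gt0]; first exact: dvdn0.
  by have := a_min z; rewrite z_gt0 za Sz => /(_ isT).
have gap_sub : ~~ S (z - a + g).
  by apply: contra gap_zg => S_sub; rewrite -(subnK az) addnAC Sadd.
by rewrite -(subnK az) dvdn_addr // IH //; lia.
Qed.

Lemma frobenius_reflective_lower F :
  frobenius_is S F -> g <= F < 2 * g -> g <= F - g + a.
Proof.
case: Smult => a_gt0 Sa _ [SF F_max] /andP [gF F2g].
rewrite leqNgt; apply/negP => small.
have S_base : S (F - g).
  by apply: reflective_mem_unshift; [lia | rewrite subnK].
have := reflective_memN_shift small (Sadd S_base Sa).
by move/negP; apply; apply: F_max; lia.
Qed.

End Reflective.

Lemma residue_of_window (g x a r : nat) :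
  a %| x -> x < g <= x + a -> 0 < r < a -> g = r %[mod a] -> g - x = r.
Proof.
move=> /dvdnP [k ->] /andP [xg ga] /andP [r_gt0 ra].
have [d_lt | d_ge] := ltnP (g - k * a) a.
  by rewrite -{1}(subnKC (ltnW xg)) modnMDl (modn_small d_lt) (modn_small ra).
have d_eq : g = k.+1 * a by rewrite mulSnr; lia.
by rewrite d_eq modnMl (modn_small ra) => r0; lia.
Qed.

Theorem mainTheorem3 (S : pred nat) (g a r F : nat) :
  numerical_semigroup S ->
  genus_is S g -> 1 <= g ->
  multiplicity_is S a ->
  reflective S g ->
  1 <= r <= a - 1 -> g = r %[mod a] ->
  frobenius_is S F ->
  F = 2 * g - r.
Proof.
move=> [S0 Sadd _] Sgenus g_gt0 Smult Srefl r_bounds gr Sfrob.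
have F2g : F < 2 * g.
  rewrite ltnNge; apply/negP => /(reflective_mem_ge_double Sgenus Srefl).
  by case: Sfrob => /negPf ->.
have gF : g <= F.
  have gap_g : ~~ S g by rewrite -[g]add0n reflective_memN_shift.
  by case: Sfrob => _ F_max; rewrite leqNgt; apply: contra gap_g => /F_max.
have a_dvd : a %| F - g.
  apply: (reflective_shifted_gap_dvd Sadd Smult Srefl); first lia.
  by rewrite subnK //; case: Sfrob.
have window : F - g < g <= F - g + a.
  apply/andP; split; first lia.
  by apply: (frobenius_reflective_lower Sadd Smult Srefl Sfrob); rewrite gF.
have r_lt_a : 0 < r < a by apply/andP; lia.
have := residue_of_window a_dvd window r_lt_a gr.
lia.
Qed.
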